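(* Let $(V,L,\varphi,E)$ and $(V,C,\psi,E)$ be valuation systems. Assume that $\psi$ extends $\varphi$ and that $\psi$ is extendible. Then $\varphi$ is extendible and $\overline\psi$ extends $\overline\varphi$.
   Context: A valuation system $(V,L,\varphi,E)$ consists of: (i) a lattice $V$ which is $\sigma$-distributive (for every $a\in V$ and sequence $(b_n)$ with existing infimum, $\bigwedge_n(a\vee b_n)$ exists and equals $a\vee\bigwedge_n b_n$, and dually for suprema); (ii) a sublattice $L$ of $V$; (iii) a partially ordered abelian group $E$ which is R-complete (whenever $x_1\ge x_2\ge\cdots$ and $y_1\ge y_2\ge\cdots$ in $E$ are such that $\bigwedge_n(x_n+y_n)$ exists, $\bigwedge_n x_n$ and $\bigwedge_n y_n$ exist; dually for increasing sequences); (iv) a valuation $\varphi:L\to E$ (order-preserving, $\varphi(a\wedge b)+\varphi(a\vee b)=\varphi(a)+\varphi(b)$). A map $\psi:C\to E$ extends $\varphi:L\to E$ if $L\subseteq C$ and $\psi|_L=\varphi$. A decreasing (resp. increasing) sequence $(a_n)$ in $L$ is $\varphi$-convergent if $\bigwedge_n a_n$ exists in $V$ and $\bigwedge_n\varphi(a_n)$ exists in $E$ (resp. with suprema). $\Pi L:=\{\bigwedge_n a_n:(a_n)\ \varphi\text{-convergent decreasing}\}$ and $\varphi$ is $\Pi$-extendible if there is a valuation $\Pi\varphi:\Pi L\to E$ with $\Pi\varphi(\bigwedge_n a_n)=\bigwedge_n\varphi(a_n)$ for all such sequences; $\Sigma L,\Sigma$-extendible, $\Sigma\varphi$ dually. Hierarchy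 (transfinite recursion): $\Pi_0\varphi=\Sigma_0\varphi=\varphi$; $\varphi$ is $\Pi_{\alpha+1}$-extendible iff it is $\Sigma_\alpha$-extendible and $\Sigma_\alpha\varphi$ is $\Pi$-extendible, with $\Pi_{\alpha+1}\varphi=\Pi(\Sigma_\alpha\varphi)$; $\varphi$ is $\Sigma_{\alpha+1}$-extendible iff it is $\Pi_\alpha$-extendible and $\Pi_\alpha\varphi$ is $\Sigma$-extendible, with $\Sigma_{\alpha+1}\varphi=\Sigma(\Pi_\alpha\varphi)$; at a limit $\lambda$, $\varphi$ is $\Pi_\lambda$-extendible iff $\Pi_\alpha$-extendible for all $\alpha<\lambda$, and then $\Pi_\lambda\varphi$ is the common extension of the $\Pi_\alpha\varphi$ on $\bigcup_{\alpha<\lambda}\Pi_\alpha L$; similarly $\Sigma_\lambda$. The hierarchy has collapsed at $Q$, where $Q=\Pi_\alpha\varphi$ or $Q=\Sigma_\alpha\varphi$, if $\varphi$ is $\Pi_{\alpha+1}$- and $\Sigma_{\alpha+1}$-extendible and $\Pi(Q)=Q=\Sigma(Q)$. $\varphi$ is extendible if the hierarchy has collapsed at some $Q$; this $Q$ is then unique and denoted $\overline\varphi$. Same for $\psi$. *)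

From HB Require Import structures.
From mathcomp Require Import all_boot all_order all_algebra.
Set Implicit Arguments. Unset Strict Implicit. Unset Printing Implicit Defensive.
Import Order.TTheory GRing.Theory Num.Theory.
Notation porderZmodType := Num.POrderedZmodule.Exports.porderZmodType.

Local Open Scope order_scope.

Section Bounds.
Context {d : Order.disp_t} {T : porderType d}.
Definition is_inf (P : T -> Prop) (x : T) :=
  (forall y, P y -> x <= y) /\ (forall z, (forall y, P y -> z <= y) -> z <= x).
Definition is_sup (P : T -> Prop) (x : T) :=
  (forall y, P y -> y <= x) /\ (forall z, (forall y, P y -> y <= z) -> x <= z).
Definition inf_seq (a : nat -> T) (x : T) := is_inf (fun y => exists n, y = a n) x.
Definition sup_seq (a : nat -> T) (x : T) := is_sup (fun y => exists n, y = a n) x.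
Definition decr (a : nat -> T) := forall n, a n.+1 <= a n.
Definition incr (a : nat -> T) := forall n, a n <= a n.+1.
End Bounds.

Definition sigma_distributive {d : Order.disp_t} (V : latticeType d) :=
  (forall (a : V) (b : nat -> V) x, inf_seq b x ->
     inf_seq (fun n => Order.join a (b n)) (Order.join a x)) /\
  (forall (a : V) (b : nat -> V) x, sup_seq b x ->
     sup_seq (fun n => Order.meet a (b n)) (Order.meet a x)).

Definition po_group (E : porderZmodType) :=
  forall x y z : E, x <= y -> (x + z)%R <= (y + z)%R.

Definition R_complete (E : porderZmodType) :=
  (forall x y : nat -> E, decr x -> decr y ->
     (exists s, inf_seq (fun n => (x n + y n)%R) s) ->
     (exists s, inf_seq x s) /\ (exists s, inf_seq y s)) /\
  (forall x y : nat -> E, incr x -> incr y ->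
     (exists s, sup_seq (fun n => (x n + y n)%R) s) ->
     (exists s, sup_seq x s) /\ (exists s, sup_seq y s)).

Section Valuations.
Context {d : Order.disp_t} {V : latticeType d} {E : porderZmodType}.

Definition sublattice (L : V -> Prop) :=
  forall a b, L a -> L b -> L (Order.meet a b) /\ L (Order.join a b).

(** A valuation phi : L -> E on a sublattice L of V, represented by a total
    function V -> E whose values outside L are irrelevant. *)
Definition valuation (L : V -> Prop) (phi : V -> E) :=
  sublattice L /\
  (forall a b, L a -> L b -> a <= b -> phi a <= phi b) /\
  (forall a b, L a -> L b ->
     (phi (Order.meet a b) + phi (Order.join a b))%R = (phi a + phi b)%R).

(** A partial map C -> E, C a subset of V: (domain, values). *)
Definition pfun := ((V -> Prop) * (V -> E))%type.

Definition extends (P Q : pfun) :=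
  (forall x, P.1 x -> Q.1 x) /\ (forall x, P.1 x -> Q.2 x = P.2 x).

Definition same (P Q : pfun) := extends P Q /\ extends Q P.

Definition PiDom (P : pfun) : V -> Prop := fun x =>
  exists a : nat -> V, (forall n, P.1 (a n)) /\ decr a /\ inf_seq a x /\
    exists e, inf_seq (fun n => P.2 (a n)) e.
Definition SigDom (P : pfun) : V -> Prop := fun x =>
  exists a : nat -> V, (forall n, P.1 (a n)) /\ incr a /\ sup_seq a x /\
    exists e, sup_seq (fun n => P.2 (a n)) e.

(** [PiExt P Q] : P is Pi-extendible and Q represents Pi P. *)
Definition PiExt (P Q : pfun) :=
  (forall x, Q.1 x <-> PiDom P x) /\ valuation Q.1 Q.2 /\
  (forall (a : nat -> V) x e, (forall n, P.1 (a n)) -> decr a ->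
     inf_seq a x -> inf_seq (fun n => P.2 (a n)) e -> Q.2 x = e).
Definition SigExt (P Q : pfun) :=
  (forall x, Q.1 x <-> SigDom P x) /\ valuation Q.1 Q.2 /\
  (forall (a : nat -> V) x e, (forall n, P.1 (a n)) -> incr a ->
     sup_seq a x -> sup_seq (fun n => P.2 (a n)) e -> Q.2 x = e).
End Valuations.

(** Ordinals, as Brouwer trees with limits indexed by arbitrary types. *)
Inductive ord : Type :=
| OZ : ord
| OS : ord -> ord
| OL : forall I : Type, (I -> ord) -> ord.

Section Hierarchy.
Context {d : Order.disp_t} {V : latticeType d} {E : porderZmodType}.

(** [stages phi alpha] = (PiH, SigH) where [PiH Q] means: phi is
    Pi_alpha-extendible and Q represents Pi_alpha phi (similarly SigH). *)
Fixpoint stages (phi : @pfun d V E) (alpha : ord)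
    : (pfun -> Prop) * (pfun -> Prop) :=
  match alpha with
  | OZ => (fun Q => same Q phi, fun Q => same Q phi)
  | OS b =>
      (fun Q => exists Q0, (stages phi b).2 Q0 /\ PiExt Q0 Q,
       fun Q => exists Q0, (stages phi b).1 Q0 /\ SigExt Q0 Q)
  | OL J f =>
      (fun Q => exists Qs : J -> pfun,
          (forall i, (stages phi (f i)).1 (Qs i)) /\
          (forall x, Q.1 x <-> (phi.1 x \/ exists i, (Qs i).1 x)) /\
          extends phi Q /\ (forall i, extends (Qs i) Q),
       fun Q => exists Qs : J -> pfun,
          (forall i, (stages phi (f i)).2 (Qs i)) /\
          (forall x, Q.1 x <-> (phi.1 x \/ exists i, (Qs i).1 x)) /\
          extends phi Q /\ (forall i, extends (Qs i) Q))
  end.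

Definition PiH phi alpha := (stages phi alpha).1.
Definition SigH phi alpha := (stages phi alpha).2.

Definition collapsed (phi : @pfun d V E) (Q : pfun) :=
  exists alpha : ord,
    (PiH phi alpha Q \/ SigH phi alpha Q) /\
    (exists P, PiH phi (OS alpha) P) /\ (exists S, SigH phi (OS alpha) S) /\
    PiExt Q Q /\ SigExt Q Q.

Definition extendible (phi : @pfun d V E) := exists Q, collapsed phi Q.
End Hierarchy.

From mathcomp Require Import all_boot all_order all_algebra.
From mathcomp Require Import boolp classical_sets.
Set Implicit Arguments. Unset Strict Implicit. Unset Printing Implicit Defensive.
Import Order.TTheory GRing.Theory.
Local Open Scope classical_set_scope.
Local Open Scope order_scope.

(* Let Z be a collapse of the hierarchy of psi; it extends phi and is its own
   Pi- and Sigma-extension.  By induction on ordinals every stage of the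
   hierarchy of phi extends into any such closed valuation, which gives the
   second claim.  Inside Z a Pi- or Sigma-step of a stage with a sublattice
   domain always exists: the infima (suprema) of the values exist because they
   are values of Z, and R-completeness together with sigma-distributivity keep
   the new domain a sublattice.  Pairs of stage domains (Pi_a L, Sigma_a L)
   that are sublattices are preserved by the double step
   (Pi_(a+2), Sigma_(a+2)) and by unions of chains (limit stages), so Zorn's
   lemma gives such a pair that the double step does not enlarge; there
   Pi_a phi is its own Pi- and Sigma-extension, i.e. the hierarchy of phi has
   collapsed. *)

Lemma decr_le {d} {T : porderType d} (a : nat -> T) m n :
  decr a -> (m <= n)%N -> a n <= a m.
Proof.
move=> da /subnK <-; elim: (n - m)%N => [|k IH] //=.
by rewrite addSn; apply: le_trans (da _) IH.
Qed.

Lemma incr_le {d} {T : porderType d} (a : nat -> T) m n :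
  incr a -> (m <= n)%N -> a m <= a n.
Proof. exact: (@decr_le _ T^d). Qed.

Lemma inf_cst {d} {T : porderType d} (x : T) : inf_seq (fun=> x) x.
Proof. by split=> [_ [n ->] //|z]; apply; exists 0%N. Qed.

Lemma sup_cst {d} {T : porderType d} (x : T) : sup_seq (fun=> x) x.
Proof. exact: (@inf_cst _ T^d). Qed.

Section OrderedGroup.
Context {E : porderZmodType} (po : po_group E).

Lemma po_lerD (x y z t : E) : x <= z -> y <= t -> (x + y)%R <= (z + t)%R.
Proof.
move=> xz yt; apply: le_trans (po y xz) _.
by rewrite (addrC z) (addrC z); apply: po.
Qed.

Lemma po_lerBlDr (x y z : E) : ((x - z)%R <= y) = (x <= (y + z)%R).
Proof.
by apply/idP/idP => [/(po z)|/(po (- z)%R)]; rewrite ?subrK ?addrK.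
Qed.

Lemma po_lerBrDr (x y z : E) : (y <= (x - z)%R) = ((y + z)%R <= x).
Proof.
by apply/idP/idP => [/(po z)|/(po (- z)%R)]; rewrite ?subrK ?addrK.
Qed.

Lemma inf_sum (u v : nat -> E) e1 e2 : decr u -> decr v ->
  inf_seq u e1 -> inf_seq v e2 -> inf_seq (fun n => u n + v n)%R (e1 + e2)%R.
Proof.
move=> du dv [u_lb u_glb] [v_lb v_glb]; split=> [_ [n ->]|z z_lb].
  by apply: po_lerD; [apply: u_lb | apply: v_lb]; exists n.
have z_le m n : z <= (u m + v n)%R.
  apply: le_trans (z_lb _ (ex_intro _ (maxn m n) erefl)) _.
  by apply: po_lerD; [apply: decr_le du _ | apply: decr_le dv _];
    rewrite ?leq_maxl ?leq_maxr.
have z_e1 n : (z - v n)%R <= e1 by apply: u_glb => _ [m ->]; rewrite po_lerBlDr.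
rewrite addrC -po_lerBlDr; apply: v_glb => _ [n ->].
by rewrite po_lerBlDr addrC -po_lerBlDr.
Qed.

Lemma sup_sum (u v : nat -> E) e1 e2 : incr u -> incr v ->
  sup_seq u e1 -> sup_seq v e2 -> sup_seq (fun n => u n + v n)%R (e1 + e2)%R.
Proof.
move=> iu iv [u_ub u_lub] [v_ub v_lub]; split=> [_ [n ->]|z z_ub].
  by apply: po_lerD; [apply: u_ub | apply: v_ub]; exists n.
have le_z m n : (u m + v n)%R <= z.
  apply: le_trans _ (z_ub _ (ex_intro _ (maxn m n) erefl)).
  by apply: po_lerD; [apply: incr_le iu _ | apply: incr_le iv _];
    rewrite ?leq_maxl ?leq_maxr.
have e1_z n : e1 <= (z - v n)%R by apply: u_lub => _ [m ->]; rewrite po_lerBrDr.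
rewrite addrC -po_lerBrDr; apply: v_lub => _ [n ->].
by rewrite po_lerBrDr addrC -po_lerBrDr.
Qed.
End OrderedGroup.

Lemma inf_meet {d} {V : latticeType d} (a b : nat -> V) x y :
  inf_seq a x -> inf_seq b y -> inf_seq (fun n => a n `&` b n) (x `&` y).
Proof.
move=> [a_lb a_glb] [b_lb b_glb]; split=> [_ [n ->]|z z_lb].
  by apply: leI2; [apply: a_lb | apply: b_lb]; exists n.
rewrite lexI; apply/andP; split; [apply: a_glb | apply: b_glb] => _ [n ->];
  by apply: le_trans (z_lb _ (ex_intro _ n erefl)) _; rewrite ?leIl ?leIr.
Qed.

Lemma sup_join {d} {V : latticeType d} (a b : nat -> V) x y :
  sup_seq a x -> sup_seq b y -> sup_seq (fun n => a n `|` b n) (x `|` y).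
Proof. exact: (@inf_meet _ V^d). Qed.

Lemma sigma_distributive_dual {d} (V : latticeType d) :
  sigma_distributive V -> sigma_distributive V^d.
Proof. by case. Qed.

Lemma inf_join {d} {V : latticeType d} (a b : nat -> V) x y :
  sigma_distributive V -> decr a -> decr b -> inf_seq a x -> inf_seq b y ->
  inf_seq (fun n => a n `|` b n) (x `|` y).
Proof.
move=> [sd _] da db ia ib; have [a_lb _] := ia; have [b_lb _] := ib.
split=> [_ [n ->]|z z_lb].
  by apply: leU2; [apply: a_lb | apply: b_lb]; exists n.
have z_le m n : z <= a m `|` b n.
  apply: le_trans (z_lb _ (ex_intro _ (maxn m n) erefl)) _.
  by apply: leU2; [apply: decr_le da _ | apply: decr_le db _];
    rewrite ?leq_maxl ?leq_maxr.
have z_le_ay m : z <= a m `|` y.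
  by apply: (sd (a m) b y ib).2 => _ [n ->]; exact: z_le.
rewrite joinC; apply: (sd y a x ia).2 => _ [m ->]; rewrite joinC; exact: z_le_ay.
Qed.

Lemma sup_meet {d} {V : latticeType d} (a b : nat -> V) x y :
  sigma_distributive V -> incr a -> incr b -> sup_seq a x -> sup_seq b y ->
  sup_seq (fun n => a n `&` b n) (x `&` y).
Proof. by move=> /sigma_distributive_dual; apply: (@inf_join _ V^d). Qed.

Section Valuations.
Context {d : Order.disp_t} {V : latticeType d} {E : porderZmodType}.

Lemma valuation_sub (A B : V -> Prop) (f g : V -> E) :
  valuation A f -> sublattice B -> B `<=` A -> (forall x, B x -> f x = g x) ->
  valuation B g.
Proof.
move=> [_ [f_mono f_mod]] sB BA fg.
split=> //; split=> [a b Ba Bb ab|a b Ba Bb].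
  by rewrite -!fg //; apply: f_mono => //; apply: BA.
have [Bab Bab'] := sB a b Ba Bb.
by rewrite -!fg //; apply: f_mod; apply: BA.
Qed.

Lemma extends_trans (P Q R : @pfun d V E) : extends P Q -> extends Q R -> extends P R.
Proof.
move=> [PQ1 PQ2] [QR1 QR2]; split=> [x /PQ1 /QR1 //|x Px].
by rewrite QR2 ?PQ2 //; apply: PQ1.
Qed.

Lemma sublattice_chain_union (B : V -> Prop) I (F : I -> V -> Prop) :
  sublattice B -> (forall i, sublattice (F i)) -> (forall i, B `<=` F i) ->
  (forall i j, F i `<=` F j \/ F j `<=` F i) ->
  sublattice (fun x => B x \/ exists i, F i x).
Proof.
move=> sB sF BF F_chain x y x_in y_in.
have [[Bx By]|[i [Fix Fiy]]] : B x /\ B y \/ exists i, F i x /\ F i y.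
- case: x_in y_in => [Bx|[i Fix]] [By|[j Fjy]]; first by left.
  + by right; exists j; split=> //; apply: BF.
  + by right; exists i; split=> //; apply: BF.
  + by right; case: (F_chain i j) => ij; [exists j | exists i]; split=> //; apply: ij.
- by have [] := sB x y Bx By; split; left.
- by have [] := sF i x y Fix Fiy; split; right; exists i.
Qed.

End Valuations.

Section MonotoneLimitExtension.
Context {d : Order.disp_t} {V : latticeType d} {E : porderZmodType}.
Variables (mono : (nat -> V) -> Prop) (limV : (nat -> V) -> V -> Prop)
  (limE : (nat -> E) -> E -> Prop).
Implicit Types P Q R : @pfun d V E.

(* PiDom and PiExt are the instances (decr, inf_seq, inf_seq), SigDom and
   SigExt the instances (incr, sup_seq, sup_seq). *)
Definition lim_dom P x := exists a : nat -> V,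
  (forall n, P.1 (a n)) /\ mono a /\ limV a x /\ exists e, limE (fun n => P.2 (a n)) e.

Definition lim_ext P Q :=
  (forall x, Q.1 x <-> lim_dom P x) /\ valuation Q.1 Q.2 /\
  (forall a x e, (forall n, P.1 (a n)) -> mono a -> limV a x ->
     limE (fun n => P.2 (a n)) e -> Q.2 x = e).

Lemma lim_dom_extends P Q : extends P Q -> lim_dom P `<=` lim_dom Q.
Proof.
move=> [PQ1 PQ2] x [a [Pa [ma [ax [e ae]]]]].
exists a; split=> [n|]; first exact: PQ1.
by do 2!split=> //; exists e; rewrite (funext (fun n => PQ2 _ (Pa n))).
Qed.

Hypotheses (mono_cst : forall x, mono (fun=> x))
  (limV_cst : forall x, limV (fun=> x) x) (limE_cst : forall e, limE (fun=> e) e).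

Lemma lim_dom_cst P : P.1 `<=` lim_dom P.
Proof. by move=> x Px; exists (fun=> x); do 3!split=> //; exists (P.2 x). Qed.

Lemma lim_ext_extends P Q : lim_ext P Q -> extends P Q.
Proof.
move=> [QP [_ Qlim]]; split=> [x /lim_dom_cst /QP //|x Px].
exact: (Qlim (fun=> x)).
Qed.

Lemma lim_ext_into_closed P R Q :
  extends P Q -> lim_ext P R -> lim_ext Q Q -> extends R Q.
Proof.
move=> [PQ1 PQ2] [RP [_ Rlim]] [QQ [_ Qlim]].
have PQ := lim_dom_extends (conj PQ1 PQ2).
split=> [x /RP /PQ /QQ //|x /RP [a [Pa [ma [ax [e ae]]]]]].
rewrite (Rlim a x e) //; apply: (Qlim a) => //; first by move=> n; apply: PQ1.
by rewrite (funext (fun n => PQ2 _ (Pa n))).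
Qed.

Variable Z : @pfun d V E.
Hypothesis Z_closed : lim_ext Z Z.

Lemma lim_dom_closed R : extends R Z -> lim_dom R `<=` Z.1.
Proof. by move=> RZ x /(lim_dom_extends RZ) /Z_closed.1. Qed.

Lemma lim_ext_closed_value R a x e : extends R Z -> (forall n, R.1 (a n)) ->
  mono a -> limV a x -> limE (fun n => R.2 (a n)) e -> Z.2 x = e.
Proof.
move=> [RZ1 RZ2] Ra ma ax ae.
apply: Z_closed.2.2 ax _ => //; first by move=> n; apply: RZ1.
by rewrite (funext (fun n => RZ2 _ (Ra n))).
Qed.

Lemma lim_ext_closed_step R :
  extends R Z -> sublattice (lim_dom R) -> lim_ext R (lim_dom R, Z.2).
Proof.
move=> RZ sR; split=> //; split=> [|a x e]; last exact: lim_ext_closed_value RZ.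
exact: valuation_sub Z_closed.2.1 sR (lim_dom_closed RZ) _.
Qed.

Lemma lim_ext_closed_self R : extends R Z -> sublattice (lim_dom R) ->
  lim_dom R `<=` R.1 -> lim_ext R R.
Proof.
move=> RZ sR domR.
have RR x : R.1 x <-> lim_dom R x by split=> [/lim_dom_cst|/domR].
split=> //; split=> [|a x e Ra ma ax ae].
  apply: valuation_sub Z_closed.2.1 _ RZ.1 RZ.2.
  by move=> a b /RR Ra /RR Rb; have [] := sR a b Ra Rb; split; apply/RR.
have Rx : R.1 x by apply/RR; exists a; do 3!split=> //; exists e.
by rewrite -RZ.2 //; exact: lim_ext_closed_value RZ Ra ma ax ae.
Qed.

End MonotoneLimitExtension.

Section PiSigma.
Context {d : Order.disp_t} {V : latticeType d} {E : porderZmodType}.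
Implicit Types P Q R Z : @pfun d V E.

Let decr_cst (x : V) : decr (fun=> x). Proof. by move=> n. Qed.
Let incr_cst (x : V) : incr (fun=> x). Proof. by move=> n. Qed.

Lemma PiDom_cst P : P.1 `<=` PiDom P.
Proof. exact: (lim_dom_cst decr_cst inf_cst inf_cst). Qed.

Lemma SigDom_cst P : P.1 `<=` SigDom P.
Proof. exact: (lim_dom_cst incr_cst sup_cst sup_cst). Qed.

Lemma PiExt_extends P Q : PiExt P Q -> extends P Q.
Proof. exact: (lim_ext_extends decr_cst inf_cst inf_cst). Qed.

Lemma SigExt_extends P Q : SigExt P Q -> extends P Q.
Proof. exact: (lim_ext_extends incr_cst sup_cst sup_cst). Qed.

Lemma PiExt_closed_step Z R : PiExt Z Z -> extends R Z ->
  sublattice (PiDom R) -> PiExt R (PiDom R, Z.2).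
Proof. by move=> Z_closed; apply: lim_ext_closed_step. Qed.

Lemma SigExt_closed_step Z R : SigExt Z Z -> extends R Z ->
  sublattice (SigDom R) -> SigExt R (SigDom R, Z.2).
Proof. by move=> Z_closed; apply: lim_ext_closed_step. Qed.

Lemma PiExt_closed_self Z R : PiExt Z Z -> extends R Z ->
  sublattice (PiDom R) -> PiDom R `<=` R.1 -> PiExt R R.
Proof. by move=> Z_closed; apply: (lim_ext_closed_self decr_cst inf_cst inf_cst). Qed.

Lemma SigExt_closed_self Z R : SigExt Z Z -> extends R Z ->
  sublattice (SigDom R) -> SigDom R `<=` R.1 -> SigExt R R.
Proof. by move=> Z_closed; apply: (lim_ext_closed_self incr_cst sup_cst sup_cst). Qed.

End PiSigma.

Section DomainSublattice.
Context {d : Order.disp_t} {V : latticeType d} {E : porderZmodType}.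
Hypotheses (sd : sigma_distributive V) (po : po_group E) (Rc : R_complete E).
Implicit Types P : @pfun d V E.

Lemma PiDom_sublattice P : valuation P.1 P.2 -> sublattice (PiDom P).
Proof.
move=> [sP [mP vP]] x y [a [Pa [da [ax [e1 fa]]]]] [b [Pb [db [bx [e2 fb]]]]].
have [PI PU] : (forall n, P.1 (a n `&` b n)) /\ (forall n, P.1 (a n `|` b n)).
  by split=> n; have [] := sP _ _ (Pa n) (Pb n).
have dI : decr (fun n => P.2 (a n `&` b n)) by move=> n; apply: mP => //; apply: leI2.
have dU : decr (fun n => P.2 (a n `|` b n)) by move=> n; apply: mP => //; apply: leU2.
(* By modularity the values on meets plus those on joins have infimum
   e1 + e2, so R-completeness yields both infima separately. *)
have fab : inf_seq (fun n => P.2 (a n `&` b n) + P.2 (a n `|` b n))%R (e1 + e2)%R.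
  rewrite (funext (fun n => vP _ _ (Pa n) (Pb n))).
  by apply: inf_sum fa fb => // n; apply: mP.
have [[eI fI] [eU fU]] := Rc.1 _ _ dI dU (ex_intro _ _ fab).
split.
  exists (fun n => a n `&` b n); split=> //; split=> [n|]; first exact: leI2.
  by split; [apply: inf_meet | exists eI].
exists (fun n => a n `|` b n); split=> //; split=> [n|]; first exact: leU2.
by split; [apply: inf_join | exists eU].
Qed.

Lemma SigDom_sublattice P : valuation P.1 P.2 -> sublattice (SigDom P).
Proof.
move=> [sP [mP vP]] x y [a [Pa [ia [ax [e1 fa]]]]] [b [Pb [ib [bx [e2 fb]]]]].
have [PI PU] : (forall n, P.1 (a n `&` b n)) /\ (forall n, P.1 (a n `|` b n)).
  by split=> n; have [] := sP _ _ (Pa n) (Pb n).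
have iI : incr (fun n => P.2 (a n `&` b n)) by move=> n; apply: mP => //; apply: leI2.
have iU : incr (fun n => P.2 (a n `|` b n)) by move=> n; apply: mP => //; apply: leU2.
have fab : sup_seq (fun n => P.2 (a n `&` b n) + P.2 (a n `|` b n))%R (e1 + e2)%R.
  rewrite (funext (fun n => vP _ _ (Pa n) (Pb n))).
  by apply: sup_sum fa fb => // n; apply: mP.
have [[eI fI] [eU fU]] := Rc.2 _ _ iI iU (ex_intro _ _ fab).
split.
  exists (fun n => a n `&` b n); split=> //; split=> [n|]; first exact: leI2.
  by split; [apply: sup_meet | exists eI].
exists (fun n => a n `|` b n); split=> //; split=> [n|]; first exact: leU2.
by split; [apply: sup_join | exists eU].
Qed.

End DomainSublattice.

Section Hierarchy.
Context {d : Order.disp_t} {V : latticeType d} {E : porderZmodType}.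
Implicit Types P Q R : @pfun d V E.

Lemma extends_union I P Q R (Qs : I -> pfun) :
  extends P Q -> (forall i, extends (Qs i) Q) ->
  (forall x, R.1 x <-> P.1 x \/ exists i, (Qs i).1 x) ->
  extends P R -> (forall i, extends (Qs i) R) -> extends R Q.
Proof.
move=> PQ QsQ RPQs PR QsR.
split=> x /RPQs [Px|[i Qsx]]; first exact: PQ.1.
- exact: (QsQ i).1.
- by rewrite PQ.2 // PR.2.
- by rewrite (QsQ i).2 // (QsR i).2.
Qed.

Lemma stage_extends P al :
  (forall R, PiH P al R -> extends P R) /\ (forall R, SigH P al R -> extends P R).
Proof.
rewrite /PiH /SigH; elim: al => [|al IH|J f IH] /=.
- by split=> R [].
- split=> R [Q0 [Q0al Q0R]].
    exact: extends_trans (IH.2 _ Q0al) (PiExt_extends Q0R).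
  exact: extends_trans (IH.1 _ Q0al) (SigExt_extends Q0R).
- by split=> R [Qs [_ [_ []]]].
Qed.

Lemma collapsed_extends P Q : collapsed P Q -> extends P Q.
Proof.
move=> [al [[PQ|PQ] _]];
  [exact: (stage_extends P al).1 _ PQ | exact: (stage_extends P al).2 _ PQ].
Qed.

Lemma stage_into_closed P Q : extends P Q -> PiExt Q Q -> SigExt Q Q -> forall al,
  (forall R, PiH P al R -> extends R Q) /\ (forall R, SigH P al R -> extends R Q).
Proof.
move=> PQ Q_pi Q_sig al; rewrite /PiH /SigH; elim: al => [|al IH|J f IH] /=.
- by split=> R [RP _]; apply: extends_trans RP PQ.
- split=> R [Q0 [Q0al Q0R]].
    exact: lim_ext_into_closed (IH.2 _ Q0al) Q0R Q_pi.
  exact: lim_ext_into_closed (IH.1 _ Q0al) Q0R Q_sig.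
- split=> R [Qs [Qsf [RPQs [PR QsR]]]].
    by apply: extends_union PQ _ RPQs PR QsR => i; apply: (IH i).1.
  by apply: extends_union PQ _ RPQs PR QsR => i; apply: (IH i).2.
Qed.

End Hierarchy.

Section Collapse.
Context {d : Order.disp_t} {V : latticeType d} {E : porderZmodType}.
Hypotheses (sd : sigma_distributive V) (po : po_group E) (Rc : R_complete E).
Variables (L : V -> Prop) (phi : V -> E) (Z : @pfun d V E).
Hypotheses (vL : valuation L phi) (Z_pi : PiExt Z Z) (Z_sig : SigExt Z Z)
  (LZ : extends (L, phi) Z).
Implicit Types R S : @pfun d V E.

Definition PiZ R : pfun := (PiDom R, Z.2).
Definition SigZ R : pfun := (SigDom R, Z.2).

Lemma PiH_into_Z al R : PiH (L, phi) al R -> extends R Z.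
Proof. exact: (stage_into_closed LZ Z_pi Z_sig al).1. Qed.

Lemma SigH_into_Z al R : SigH (L, phi) al R -> extends R Z.
Proof. exact: (stage_into_closed LZ Z_pi Z_sig al).2. Qed.

Lemma extends_Z_valuation R : extends R Z -> sublattice R.1 -> valuation R.1 R.2.
Proof. by move=> RZ sR; apply: valuation_sub Z_pi.2.1 sR RZ.1 RZ.2. Qed.

Lemma PiH_succ al S : SigH (L, phi) al S -> sublattice S.1 ->
  PiH (L, phi) (OS al) (PiZ S) /\ sublattice (PiZ S).1.
Proof.
move=> Sal sS; have SZ := SigH_into_Z Sal.
have sPi := PiDom_sublattice sd po Rc (extends_Z_valuation SZ sS).
by split=> //; exists S; split=> //; apply: PiExt_closed_step.
Qed.

Lemma SigH_succ al R : PiH (L, phi) al R -> sublattice R.1 ->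
  SigH (L, phi) (OS al) (SigZ R) /\ sublattice (SigZ R).1.
Proof.
move=> Ral sR; have RZ := PiH_into_Z Ral.
have sSig := SigDom_sublattice sd po Rc (extends_Z_valuation RZ sR).
by split=> //; exists R; split=> //; apply: SigExt_closed_step.
Qed.

Lemma collapsed_at al R S : PiH (L, phi) al R -> SigH (L, phi) al S ->
  sublattice R.1 -> sublattice S.1 -> (PiZ (SigZ R)).1 `<=` R.1 ->
  collapsed (L, phi) R.
Proof.
move=> Ral Sal sR sS PiSigR_R; have RZ := PiH_into_Z Ral.
have vR := extends_Z_valuation RZ sR.
have R_SigZ : extends R (SigZ R).
  apply: SigExt_extends (SigExt_closed_step Z_sig RZ _).
  exact: SigDom_sublattice.
exists al; split; first by left.
split; first by exists (PiZ S); apply: (PiH_succ Sal sS).1.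
split; first by exists (SigZ R); apply: (SigH_succ Ral sR).1.
split.
  apply: PiExt_closed_self Z_pi RZ (PiDom_sublattice sd po Rc vR) _.
  by move=> x /(lim_dom_extends R_SigZ) /PiSigR_R.
apply: SigExt_closed_self Z_sig RZ (SigDom_sublattice sd po Rc vR) _.
by move=> x Sx; apply/PiSigR_R/PiDom_cst.
Qed.

Definition stage_domains (p : (V -> Prop) * (V -> Prop)) := exists al R S,
  [/\ PiH (L, phi) al R, SigH (L, phi) al S, p = (R.1, S.1),
      sublattice R.1 & sublattice S.1].

Lemma stage_domains_base : stage_domains (L, L).
Proof. by exists OZ, (L, phi), (L, phi); split=> //; case: vL. Qed.

Lemma stage_domains_succ al R S : PiH (L, phi) al R -> SigH (L, phi) al S ->
  sublattice R.1 -> sublattice S.1 ->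
  stage_domains ((PiZ (SigZ R)).1, (SigZ (PiZ S)).1).
Proof.
move=> Ral Sal sR sS; have [SigR sSigR] := SigH_succ Ral sR.
have [PiS sPiS] := PiH_succ Sal sS.
have [PiSigR sPiSigR] := PiH_succ SigR sSigR.
have [SigPiS sSigPiS] := SigH_succ PiS sPiS.
by exists (OS (OS al)), (PiZ (SigZ R)), (SigZ (PiZ S)).
Qed.

Lemma stage_domains_chain I (p : I -> (V -> Prop) * (V -> Prop)) :
  (forall i, stage_domains (p i)) ->
  (forall i j, (p i).1 `<=` (p j).1 /\ (p i).2 `<=` (p j).2 \/
               (p j).1 `<=` (p i).1 /\ (p j).2 `<=` (p i).2) ->
  exists2 q, stage_domains q & forall i, (p i).1 `<=` q.1 /\ (p i).2 `<=` q.2.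
Proof.
move=> p_st.
have /choice [st stP] : forall i, exists t : ord * pfun * pfun,
    [/\ PiH (L, phi) t.1.1 t.1.2, SigH (L, phi) t.1.1 t.2, p i = (t.1.2.1, t.2.1),
        sublattice t.1.2.1 & sublattice t.2.1].
  by move=> i; have [al [R [S ?]]] := p_st i; exists (al, R, S).
pose al i := (st i).1.1; pose R i := (st i).1.2; pose S i := (st i).2.
have Ral i : PiH (L, phi) (al i) (R i) by case: (stP i).
have Sal i : SigH (L, phi) (al i) (S i) by case: (stP i).
have -> : p = fun i => ((R i).1, (S i).1) by apply: funext => i; case: (stP i).
move=> /= RS_chain.
pose D1 x := L x \/ exists i, (R i).1 x.
pose D2 x := L x \/ exists i, (S i).1 x.
exists (D1, D2); last by move=> i; split=> x pix; right; exists i.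
exists (OL al), (D1, Z.2), (D2, Z.2); split=> //.
- exists R; do 2!split=> //.
  split=> [|i]; split=> x Dx; [by left | exact: LZ.2 | by right; exists i |].
  exact: (PiH_into_Z (Ral i)).2.
- exists S; do 2!split=> //.
  split=> [|i]; split=> x Dx; [by left | exact: LZ.2 | by right; exists i |].
  exact: (SigH_into_Z (Sal i)).2.
- apply: sublattice_chain_union => [|i|i|i j]; first by case: vL.
  + by case: (stP i).
  + exact: ((stage_extends _ _).1 _ (Ral i)).1.
  + by case: (RS_chain i j) => [[ij _]|[ji _]]; [left|right].
- apply: sublattice_chain_union => [|i|i|i j]; first by case: vL.
  + by case: (stP i).
  + exact: ((stage_extends _ _).2 _ (Sal i)).1.
  + by case: (RS_chain i j) => [[_ ij]|[_ ji]]; [left|right].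
Qed.

Lemma closed_extension_extendible : extendible (L, phi).
Proof.
pose T := {p | stage_domains p}.
pose below (s t : T) : bool :=
  `[< (sval s).1 `<=` (sval t).1 /\ (sval s).2 `<=` (sval t).2 >].
have [s|r s t|A A_chain|t t_max] :=
  ZL_preorder (exist _ _ stage_domains_base : T) (R := below).
- by rewrite /below; apply/asboolP; split.
- rewrite /below => /asboolP[rs1 rs2] /asboolP[st1 st2]; apply/asboolP.
  by split=> x; [move/rs1/st1 | move/rs2/st2].
- pose p (s : {s | A s}) := sval (sval s).
  have p_chain i j : (p i).1 `<=` (p j).1 /\ (p i).2 `<=` (p j).2 \/
                     (p j).1 `<=` (p i).1 /\ (p j).2 `<=` (p i).2.
    case: i j => [s As] [t At].
    by case: (A_chain s t As At) => /asboolP; [left | right].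
  have [q q_st q_ub] := stage_domains_chain (fun s => svalP (sval s)) p_chain.
  by exists (exist _ q q_st) => s As; apply/asboolP; exact: q_ub (exist _ s As).
have [al [R [S [Ral Sal t_RS sR sS]]]] := svalP t.
pose succ : T := exist _ _ (stage_domains_succ Ral Sal sR sS).
have t_succ : below t succ.
  apply/asboolP; rewrite t_RS; split=> x /= RSx.
    by apply/PiDom_cst/SigDom_cst.
  by apply/SigDom_cst/PiDom_cst.
have /asboolP[succ_t _] := t_max _ t_succ.
rewrite t_RS in succ_t.
by exists R; apply: (collapsed_at Ral Sal sR sS).
Qed.

End Collapse.

Theorem proposition5p35 (d : Order.disp_t) (V : latticeType d)
    (E : porderZmodType)
    (L C : V -> Prop) (phi psi : V -> E) :
  sigma_distributive V -> po_group E -> R_complete E ->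
  valuation L phi -> valuation C psi ->
  extends (L, phi) (C, psi) ->
  extendible (C, psi) ->
  extendible (L, phi) /\
  (forall Q Q' : pfun, collapsed (L, phi) Q -> collapsed (C, psi) Q' ->
     extends Q Q').
Proof.
move=> sd po Rc vL _ LC [Z Z_col].
have [_ [_ [_ [_ [Z_pi Z_sig]]]]] := Z_col.
have LZ := extends_trans LC (collapsed_extends Z_col).
split; first exact: (closed_extension_extendible sd po Rc vL Z_pi Z_sig LZ).
move=> Q Q' [al [Q_al _]] Q'_col; have [_ [_ [_ [_ [Q'_pi Q'_sig]]]]] := Q'_col.
have LQ' := extends_trans LC (collapsed_extends Q'_col).
have [PiQ' SigQ'] := stage_into_closed LQ' Q'_pi Q'_sig al.
by case: Q_al => [/PiQ'|/SigQ'].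
Qed.
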